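(* Let $C$ be a basic $k$-coalgebra and $A,B$ subcoalgebras of $C$. (a) A complete set of pairwise non-isomorphic simple right $A\wedge^C B$-comodules is the union of a complete set of simple right $A$-comodules and a complete set of simple right $B$-comodules; i.e. every simple subcoalgebra of $A\wedge^C B$ lies in $A$ or in $B$. (b) For simple subcoalgebras $S,T$ of $A\wedge^C B$: $S\wedge^{A\wedge^C B}T=S\oplus T$ if $S\not\subseteq A$ and $T\not\subseteq B$; $S\wedge^{A\wedge^C B}T=S\wedge^C T$ if $S\subseteq A$ and $T\subseteq B$; $S\wedge^{A\wedge^C B}T=S\wedge^A T$ if $S\subseteq A$ and $T\not\subseteq B$; $S\wedge^{A\wedge^C B}T=S\wedge^B T$ if $S\not\subseteq A$ and $T\subseteq B$. *)

(* Tensors in V (x) V are presented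
   as finite sums of simple tensors (seq (V * V)); statements about tensors
   are made through the pairing with pairs of linear functionals, i.e. via
   the dual algebra C^*, as in Sweedler's X /\ Y = (X^perp Y^perp)^perp. *)
From HB Require Import structures.
From mathcomp Require Import all_boot all_order all_algebra.
Set Implicit Arguments. Unset Strict Implicit. Unset Printing Implicit Defensive.
Import Order.TTheory GRing.Theory Num.Theory.
Local Open Scope ring_scope.

Section Coalg.
Variables (k : fieldType) (V : lmodType k).

Definition lfun (f : V -> k) : Prop :=
  forall (a : k) (u v : V), f (a *: u + v) = a * f u + f v.

Definition tpair (f g : V -> k) (t : seq (V * V)) : k :=
  \sum_(p <- t) f p.1 * g p.2.

Definition perp (X : V -> Prop) (f : V -> k) : Prop :=
  forall x, X x -> f x = 0.

(* t \in X (x) Y *)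
Definition in_tensor (X Y : V -> Prop) (t : seq (V * V)) : Prop :=
  forall f g, lfun f -> lfun g -> (perp X f \/ perp Y g) -> tpair f g t = 0.

(* t \in X (x) V + V (x) Y *)
Definition in_tsum (X Y : V -> Prop) (t : seq (V * V)) : Prop :=
  forall f g, lfun f -> lfun g -> perp X f -> perp Y g -> tpair f g t = 0.

Definition subspace (X : V -> Prop) : Prop :=
  X 0 /\ forall (a : k) u v, X u -> X v -> X (a *: u + v).

Definition vincl (X Y : V -> Prop) : Prop := forall x, X x -> Y x.

Definition vsame (X Y : V -> Prop) : Prop := forall x, X x <-> Y x.

Definition vsum (X Y : V -> Prop) : V -> Prop :=
  fun v => exists x y, X x /\ Y y /\ v = x + y.

End Coalg.

Record coalgebra (k : fieldType) (V : lmodType k) := Coalgebra {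
  cm : V -> seq (V * V);
  ce : V -> k;
  ce_lin : lfun ce;
  cm_lin : forall f g, lfun f -> lfun g -> lfun (fun c => tpair f g (cm c));
  cm_coassoc : forall f g h c, lfun f -> lfun g -> lfun h ->
    \sum_(p <- cm c) tpair f g (cm p.1) * h p.2
    = \sum_(p <- cm c) f p.1 * tpair g h (cm p.2);
  cm_counitl : forall c, \sum_(p <- cm c) ce p.1 *: p.2 = c;
  cm_counitr : forall c, \sum_(p <- cm c) ce p.2 *: p.1 = c
}.

Section CoalgDefs.
Variables (k : fieldType) (V : lmodType k) (C : coalgebra V).

Definition subcoalg (D : V -> Prop) : Prop :=
  subspace D /\ forall c, D c -> in_tensor D D (cm C c).

Definition simple_subcoalg (S : V -> Prop) : Prop :=
  [/\ subcoalg S, exists x, S x /\ x <> 0 &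
      forall T, subcoalg T -> vincl T S ->
        (forall x, T x -> x = 0) \/ vsame T S].

(* wedge relative to a subcoalgebra D:
   X /\^D Y = Delta_D^{-1}(X (x) D + D (x) Y), using
   X (x) D + D (x) Y = (X (x) C + C (x) Y) \cap (D (x) D). *)
Definition wedge (D X Y : V -> Prop) : V -> Prop :=
  fun c => [/\ D c, in_tensor D D (cm C c) & in_tsum X Y (cm C c)].

Definition conv (f g : V -> k) : V -> k := fun c => tpair f g (cm C c).

(* C is basic: for every simple subcoalgebra S, the dual algebra S^* is a
   division algebra.  Functionals on S are represented by functionals on C
   (restriction is onto); f is nonzero in S^* iff it does not vanish on S,
   and the unit of S^* is epsilon restricted to S. *)
Definition basic : Prop :=
  forall S, simple_subcoalg S ->
  forall f, lfun f -> (exists s, S s /\ f s <> 0) ->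
  exists g, lfun g /\
    forall s, S s -> conv f g s = ce C s /\ conv g f s = ce C s.

End CoalgDefs.

From HB Require Import structures.
From mathcomp Require Import all_boot all_order all_algebra.
From mathcomp Require Import boolp classical_sets.
Set Implicit Arguments. Unset Strict Implicit. Unset Printing Implicit Defensive.
Import GRing.Theory.
Local Open Scope ring_scope.

(* By Zorn's lemma partial linear functionals extend to [V], so a subspace is
   the common kernel of the functionals vanishing on it, and a functional
   vanishing on [X \cap Y] is the sum of one vanishing on [X] and one vanishing
   on [Y].  Splitting the counit in this way shows that if [Delta c] lies in
   [X (x) C + C (x) Y] and in [X' (x) C + C (x) Y] with [X \cap X' = 0], then
   [c \in Y].  A simple subcoalgebra [S] meets every subcoalgebra not containing
   it in [0]; if [S \subseteq A /\ B] met both [A] and [B] in [0], the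
   splitting would put [S] inside [B], so [S = 0].  This gives (a), and the same
   splitting, together with coassociativity, identifies each wedge in (b). *)

Section LinearFunctionals.
Local Open Scope classical_set_scope.
Variables (k : fieldType) (V : lmodType k).
Implicit Types (f g : V -> k) (X Y : V -> Prop).

Lemma lfun0 f : lfun f -> f 0 = 0.
Proof.
by move=> lf; have /eqP := lf 1 0 0; rewrite scale1r addr0 mul1r -subr_eq subrr eq_sym => /eqP.
Qed.

Lemma lfunD f u v : lfun f -> f (u + v) = f u + f v.
Proof. by move=> lf; have := lf 1 u v; rewrite scale1r mul1r. Qed.

Lemma lfunZ f a u : lfun f -> f (a *: u) = a * f u.
Proof. by move=> lf; have := lf a u 0; rewrite addr0 (lfun0 lf) addr0. Qed.

Lemma lfunB f u v : lfun f -> f (u - v) = f u - f v.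
Proof. by move=> lf; rewrite lfunD // -scaleN1r lfunZ // mulN1r. Qed.

Lemma lfun_sum f (I : Type) (r : seq I) (F : I -> V) : lfun f ->
  f (\sum_(i <- r) F i) = \sum_(i <- r) f (F i).
Proof.
move=> lf; elim: r => [|i r IHr]; first by rewrite !big_nil lfun0.
by rewrite !big_cons lfunD // IHr.
Qed.

Lemma subspaceD X u v : subspace X -> X u -> X v -> X (u + v).
Proof. by move=> [_ XZD] Xu Xv; have := XZD 1 u v Xu Xv; rewrite scale1r. Qed.

Lemma subspaceB X u v : subspace X -> X u -> X v -> X (u - v).
Proof. by move=> [_ XZD] Xu Xv; have := XZD (-1) v u Xv Xu; rewrite scaleN1r addrC. Qed.

Lemma vsum_subspace X Y : subspace X -> subspace Y -> subspace (vsum X Y).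
Proof.
move=> [X0 XZD] [Y0 YZD]; split; first by exists 0, 0; rewrite addr0.
move=> a u v [x [y [Xx [Yy ->]]]] [x' [y' [Xx' [Yy' ->]]]].
exists (a *: x + x'), (a *: y + y'); do 2?split; [exact: XZD | exact: YZD |].
by rewrite scalerDr addrACA.
Qed.

Definition linear_graph (G : set (V * k)) : Prop :=
  [/\ forall u a b, G (u, a) -> G (u, b) -> a = b, G (0, 0) &
      forall c u v a b, G (u, a) -> G (v, b) -> G (c *: u + v, c * a + b)].

Definition graph_adjoin (G : set (V * k)) v a : set (V * k) :=
  fun p => exists u b c, [/\ G (u, b), p.1 = u + c *: v & p.2 = b + c * a].

Lemma graph_adjoin_sub G v a : G `<=` graph_adjoin G v a.
Proof. by move=> [u b] Gub; exists u, b, 0; rewrite scale0r mul0r !addr0. Qed.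

Lemma graph_adjoin_new G v a : linear_graph G -> graph_adjoin G v a (v, a).
Proof. by case=> _ G0 _; exists 0, 0, 1; rewrite scale1r mul1r !add0r. Qed.

Lemma linear_graph_adjoin G v a : linear_graph G -> (forall b, ~ G (v, b)) ->
  linear_graph (graph_adjoin G v a).
Proof.
move=> [Gfun G0 GZD] Gv; split.
- move=> w a1 a2 [u1 [b1 [c1 [G1 /= -> ->]]]] [u2 [b2 [c2 [G2 /= e ->]]]].
  (* For [c1 != c2] the two representations would put [v] in the domain of [G]. *)
  have [ec|nc] := eqVneq c1 c2.
    by subst c2; move/addIr: e => eu; subst u2; rewrite (Gfun _ _ _ G1 G2).
  exfalso; apply: (Gv ((c1 - c2)^-1 * (-1 * b1 + b2) + 0)).
  have -> : v = (c1 - c2)^-1 *: (-1 *: u1 + u2) + 0.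
    have -> : -1 *: u1 + u2 = (c1 - c2) *: v.
      have -> : u2 = u1 + c1 *: v - c2 *: v by rewrite e addrK.
      by rewrite scaleN1r -addrA addKr -scalerBl.
    by rewrite addr0 scalerA mulVf ?scale1r // subr_eq0.
  exact/GZD/G0/GZD.
- by exists 0, 0, 0; rewrite scale0r mul0r !addr0.
- move=> c w1 w2 a1 a2 [u1 [b1 [c1 [G1 /= -> ->]]]] [u2 [b2 [c2 [G2 /= -> ->]]]].
  exists (c *: u1 + u2), (c * b1 + b2), (c * c1 + c2); split=> /=; first exact: GZD.
    by rewrite scalerDr scalerA scalerDl addrACA.
  by rewrite mulrDr mulrA mulrDl addrACA.
Qed.

Lemma linear_graph_chain G Hs : linear_graph G ->
  (forall H, Hs H -> linear_graph (H `|` G)) -> total_on Hs subset ->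
  linear_graph (\bigcup_(H in Hs) H `|` G).
Proof.
move=> Glin HsG Hstot.
have common p q : (\bigcup_(H in Hs) H `|` G) p -> (\bigcup_(H in Hs) H `|` G) q ->
    exists H, [/\ linear_graph (H `|` G), H `<=` \bigcup_(H in Hs) H,
                  (H `|` G) p & (H `|` G) q].
  have sub_bigcup H : Hs H -> H `<=` \bigcup_(H in Hs) H by move=> HsH; apply: bigcup_sup.
  case=> [[H HsH Hp]|Gp]; case=> [[K HsK Kq]|Gq].
  - have [HK|KH] := Hstot H K HsH HsK.
    + by exists K; split; [exact: HsG | exact: sub_bigcup | left; apply: HK | left].
    + by exists H; split; [exact: HsG | exact: sub_bigcup | left | left; apply: KH].
  - by exists H; split; [exact: HsG | exact: sub_bigcup | left | right].
  - by exists K; split; [exact: HsG | exact: sub_bigcup | right | left].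
  - by exists set0; rewrite set0U; split.
split.
- move=> u a b /common /[apply] -[H [[Hfun _ _] _ Ha Hb]]; exact: Hfun Ha Hb.
- by right; case: Glin.
- move=> c u v a b /common /[apply] -[H [[_ _ HZD] Hsub Ha Hb]].
  by case: (HZD c _ _ _ _ Ha Hb) => [/Hsub|]; [left | right].
Qed.

Lemma linear_graph_extension G : linear_graph G ->
  exists F, lfun F /\ forall u a, G (u, a) -> F u = a.
Proof.
(* Zorn's lemma is applied to the [H] such that [H `|` G] is a linear graph,
   so that the empty chain is harmless. *)
move=> Glin; pose P H := linear_graph (H `|` G).
have chainP Hs : Hs `<=` P -> total_on Hs subset -> P (\bigcup_(H in Hs) H).
  by move=> HsP; apply: linear_graph_chain.
have [M [PM Mmax]] := Zorn_bigcup chainP.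
have Mtot u : exists a, (M `|` G) (u, a).
  apply: contrapT => noval.
  have Gu b : ~ (M `|` G) (u, b) by move=> Gub; apply: noval; exists b.
  have MGsub : M `|` G `<=` graph_adjoin (M `|` G) u 0 := graph_adjoin_sub u 0.
  apply: (Mmax (graph_adjoin (M `|` G) u 0)).
    split; first by move=> p Mp; apply: MGsub; left.
    by move=> /(_ _ (graph_adjoin_new u 0 PM)) Mu; apply: (Gu 0); left.
  by rewrite /P setUidl; [exact: linear_graph_adjoin | move=> p Gp; apply: MGsub; right].
have [F MF] := choice Mtot.
case: PM => Mfun _ MZD.
exists F; split; first by move=> a u v; apply: Mfun (MF _) _; apply: MZD; apply: MF.
by move=> u a Gua; apply: Mfun (MF u) _; right.
Qed.

Lemma perp_closed X v : subspace X ->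
  (forall f, lfun f -> perp X f -> f v = 0) -> X v.
Proof.
move=> Xsub vperp; apply: contrapT => Xv.
pose G (p : V * k) := X p.1 /\ p.2 = 0.
have Glin : linear_graph G.
  case: Xsub => X0 XZD; split=> [u a b [_ /= ->] [_ /= ->] //|//|c u w a b [Xu /= ->] [Xw /= ->]].
  by split; [exact: XZD | rewrite /= mulr0 addr0].
have [F [Flin FG]] := linear_graph_extension (linear_graph_adjoin 1 Glin (fun b Gv => Xv Gv.1)).
have FX : perp X F.
  by move=> x Xx; apply: FG; apply: graph_adjoin_sub; split.
by have /eqP := vperp F Flin FX; rewrite (FG _ _ (graph_adjoin_new _ _ Glin)) oner_eq0.
Qed.

Lemma perp_cap_split X Y f : subspace X -> subspace Y -> lfun f ->
  (forall x, X x -> Y x -> f x = 0) ->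
  exists f1 f2, [/\ lfun f1, lfun f2, perp X f1, perp Y f2 &
                   forall v, f v = f1 v + f2 v].
Proof.
move=> Xsub Ysub flin fXY.
pose G (p : V * k) := exists x y, [/\ X x, Y y, p.1 = x + y & p.2 = f y].
have Glin : linear_graph G.
  case: (Xsub) => X0 XZD; case: (Ysub) => Y0 YZD; split.
  - move=> w a b [x1 [y1 [Xx1 Yy1 /= -> ->]]] [x2 [y2 [Xx2 Yy2 /= e ->]]].
    have y12 : y1 - y2 = x2 - x1 by apply/eqP; rewrite subr_eq addrAC -e addrC addKr.
    have Xy12 : X (y1 - y2) by rewrite y12; apply: subspaceB.
    by apply/eqP; rewrite -subr_eq0 -lfunB // fXY //; apply: subspaceB.
  - by exists 0, 0; rewrite addr0 (lfun0 flin).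
  - move=> c u w a b [x1 [y1 [Xx1 Yy1 /= -> ->]]] [x2 [y2 [Xx2 Yy2 /= -> ->]]].
    exists (c *: x1 + x2), (c *: y1 + y2); split; [exact: XZD | exact: YZD | |].
      by rewrite /= scalerDr addrACA.
    by rewrite /= flin.
have [F [Flin FG]] := linear_graph_extension Glin.
exists F, (fun v => f v - F v); split=> //.
- by move=> a u w; rewrite flin Flin mulrBr addrACA opprD.
- by move=> x Xx; apply: FG; exists x, 0; rewrite addr0 (lfun0 flin); split=> //; case: Ysub.
- move=> y Yy; rewrite (FG y (f y)) ?subrr //.
  by exists 0, y; rewrite add0r; split=> //; case: Xsub.
- by move=> v; rewrite addrC subrK.
Qed.

End LinearFunctionals.

Section Coalgebra.
Variables (k : fieldType) (V : lmodType k) (C : coalgebra V).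
Implicit Types (f g h : V -> k) (A B D S T X Y : V -> Prop) (t : seq (V * V)).

Lemma tpair_splitl f f1 f2 g t : (forall v, f v = f1 v + f2 v) ->
  tpair f g t = tpair f1 g t + tpair f2 g t.
Proof. by move=> fD; rewrite /tpair -big_split; apply: eq_bigr => p _; rewrite fD mulrDl. Qed.

Lemma tpair_splitr f g g1 g2 t : (forall v, g v = g1 v + g2 v) ->
  tpair f g t = tpair f g1 t + tpair f g2 t.
Proof. by move=> gD; rewrite /tpair -big_split; apply: eq_bigr => p _; rewrite gD mulrDr. Qed.

Lemma lfun_cm_counitl h c : lfun h -> h c = tpair (ce C) h (cm C c).
Proof.
move=> hlin; rewrite -{1}(cm_counitl C c) lfun_sum //.
by apply: eq_bigr => p _; rewrite lfunZ.
Qed.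

Lemma lfun_cm_counitr h c : lfun h -> h c = tpair h (ce C) (cm C c).
Proof.
move=> hlin; rewrite -{1}(cm_counitr C c) lfun_sum //.
by apply: eq_bigr => p _; rewrite lfunZ // mulrC.
Qed.

Lemma tpair_conv_assoc f g h c : lfun f -> lfun g -> lfun h ->
  tpair f (conv C g h) (cm C c) = tpair (conv C f g) h (cm C c).
Proof. by move=> flin glin hlin; rewrite /tpair /conv (cm_coassoc C c flin glin hlin). Qed.

Lemma tpair_cmZD f g a u v : lfun f -> lfun g ->
  tpair f g (cm C (a *: u + v)) = a * tpair f g (cm C u) + tpair f g (cm C v).
Proof. by move=> flin glin; apply: (cm_lin C flin glin). Qed.

Definition hit g c : V := \sum_(p <- cm C c) g p.2 *: p.1.
Definition rhit f c : V := \sum_(p <- cm C c) f p.1 *: p.2.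

Lemma lfun_hit f g c : lfun f -> f (hit g c) = tpair f g (cm C c).
Proof. by move=> flin; rewrite lfun_sum //; apply: eq_bigr => p _; rewrite lfunZ // mulrC. Qed.

Lemma lfun_rhit f g c : lfun g -> g (rhit f c) = tpair f g (cm C c).
Proof. by move=> glin; rewrite lfun_sum //; apply: eq_bigr => p _; rewrite lfunZ. Qed.

Lemma in_tensorT t : in_tensor (fun _ : V => True) (fun _ => True) t.
Proof.
move=> f g _ _ [fT|gT]; rewrite /tpair big1 // => p _.
- by rewrite fT // mul0r.
- by rewrite gT // mulr0.
Qed.

Lemma in_tensorS X Y X' Y' t : vincl X X' -> vincl Y Y' ->
  in_tensor X Y t -> in_tensor X' Y' t.
Proof.
move=> XX' YY' tXY f g flin glin [fX'|gY']; apply: tXY => //.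
- by left=> x Xx; apply/fX'/XX'.
- by right=> y Yy; apply/gY'/YY'.
Qed.

Lemma in_tsumS X Y X' Y' t : vincl X X' -> vincl Y Y' ->
  in_tsum X Y t -> in_tsum X' Y' t.
Proof.
move=> XX' YY' tXY f g flin glin fX' gY'; apply: tXY => //.
- by move=> x Xx; apply/fX'/XX'.
- by move=> y Yy; apply/gY'/YY'.
Qed.

Lemma in_tensor_tsuml X Y X' Y' t : vincl X X' -> in_tensor X Y t -> in_tsum X' Y' t.
Proof. by move=> XX' tXY f g flin glin fX' _; apply: tXY => //; left=> x /XX'/fX'. Qed.

Lemma in_tensor_tsumr X Y X' Y' t : vincl Y Y' -> in_tensor X Y t -> in_tsum X' Y' t.
Proof. by move=> YY' tXY f g flin glin _ gY'; apply: tXY => //; right=> y /YY'/gY'. Qed.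

Lemma perp_convl X f g : subcoalg C X -> lfun f -> lfun g ->
  perp X f -> perp X (conv C f g).
Proof. by move=> [_ Xcm] flin glin fX x Xx; apply: Xcm => //; left. Qed.

Lemma perp_convr X f g : subcoalg C X -> lfun f -> lfun g ->
  perp X g -> perp X (conv C f g).
Proof. by move=> [_ Xcm] flin glin gX x Xx; apply: Xcm => //; right. Qed.

Lemma subcoalg_cap X Y : subcoalg C X -> subcoalg C Y ->
  subcoalg C (fun x => X x /\ Y x).
Proof.
move=> [Xsub Xcm] [Ysub Ycm]; split.
  case: (Xsub) (Ysub) => [X0 XZD] [Y0 YZD].
  by split=> // a u v [Xu Yu] [Xv Yv]; split; [exact: XZD | exact: YZD].
move=> c [Xc Yc] f g flin glin [fXY|gXY].
- have [f1 [f2 [f1lin f2lin f1X f2Y fD]]] :=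
    perp_cap_split Xsub Ysub flin (fun x Xx Yx => fXY x (conj Xx Yx)).
  by rewrite (tpair_splitl _ _ fD) (Xcm c Xc) ?(Ycm c Yc) ?addr0 //; left.
- have [g1 [g2 [g1lin g2lin g1X g2Y gD]]] :=
    perp_cap_split Xsub Ysub glin (fun x Xx Yx => gXY x (conj Xx Yx)).
  by rewrite (tpair_splitr _ _ gD) (Xcm c Xc) ?(Ycm c Yc) ?addr0 //; right.
Qed.

Lemma simple_subcoalg_cap0 S Y : simple_subcoalg C S -> subcoalg C Y ->
  ~ vincl S Y -> forall x, S x -> Y x -> x = 0.
Proof.
move=> [Scoalg _ Smin] Ycoalg SnY x Sx Yx.
have [SY0|SYS] := Smin _ (subcoalg_cap Scoalg Ycoalg) (fun x => @proj1 _ _).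
- exact: SY0 x (conj Sx Yx).
- by case: SnY => y /SYS[].
Qed.

Lemma counit_split X Y : subspace X -> subspace Y -> (forall x, X x -> Y x -> x = 0) ->
  exists e1 e2, [/\ lfun e1, lfun e2, perp X e1, perp Y e2 &
                   forall v, ce C v = e1 v + e2 v].
Proof.
move=> Xsub Ysub XY0; apply: (perp_cap_split Xsub Ysub (ce_lin C)) => x Xx Yx.
by rewrite (XY0 x Xx Yx) (lfun0 (ce_lin C)).
Qed.

Lemma in_tsum_cap0l X X' Y c : subspace X -> subspace X' -> subspace Y ->
  (forall x, X x -> X' x -> x = 0) ->
  in_tsum X Y (cm C c) -> in_tsum X' Y (cm C c) -> Y c.
Proof.
move=> Xsub X'sub Ysub XX'0 cXY cX'Y; apply: perp_closed => // f flin fY.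
have [e1 [e2 [e1lin e2lin e1X e2X' eD]]] := counit_split Xsub X'sub XX'0.
by rewrite (lfun_cm_counitl c flin) (tpair_splitl _ _ eD) cXY // cX'Y // addr0.
Qed.

Lemma in_tsum_cap0r X Y Y' c : subspace X -> subspace Y -> subspace Y' ->
  (forall y, Y y -> Y' y -> y = 0) ->
  in_tsum X Y (cm C c) -> in_tsum X Y' (cm C c) -> X c.
Proof.
move=> Xsub Ysub Y'sub YY'0 cXY cXY'; apply: perp_closed => // f flin fX.
have [e1 [e2 [e1lin e2lin e1Y e2Y' eD]]] := counit_split Ysub Y'sub YY'0.
by rewrite (lfun_cm_counitr c flin) (tpair_splitr _ _ eD) cXY // cXY' // addr0.
Qed.

Lemma tpair_cm0 f g : lfun f -> lfun g -> tpair f g (cm C 0) = 0.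
Proof. by move=> flin glin; apply: (lfun0 (cm_lin C flin glin)). Qed.

Lemma wedge_subspace D X Y : subspace D -> subspace (wedge C D X Y).
Proof.
move=> [D0 DZD]; split.
  by split=> // [f g flin glin _ | f g flin glin _ _]; apply: tpair_cm0.
move=> a u v [Du uDD uXY] [Dv vDD vXY]; split; first exact: DZD.
- by move=> f g flin glin fg; rewrite tpair_cmZD // uDD // vDD // mulr0 addr0.
- by move=> f g flin glin fX gY; rewrite tpair_cmZD // uXY // vXY // mulr0 addr0.
Qed.

Lemma wedge_subcoalg X Y : subcoalg C X -> subcoalg C Y ->
  subcoalg C (wedge C (fun _ => True) X Y).
Proof.
move=> Xcoalg Ycoalg; split; first by apply: wedge_subspace; split.
move=> c [_ _ cXY] f g flin glin [fW|gW].
- rewrite -(lfun_hit g c flin); apply: fW; split=> //; first exact: in_tensorT.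
  move=> f' h f'lin hlin f'X hY.
  rewrite (lfun_hit g c (cm_lin C f'lin hlin)) -tpair_conv_assoc //.
  by apply: cXY => //; [exact: cm_lin | exact: perp_convl].
- rewrite -(lfun_rhit f c glin); apply: gW; split=> //; first exact: in_tensorT.
  move=> h g' hlin g'lin hX g'Y.
  rewrite (lfun_rhit f c (cm_lin C hlin g'lin)) tpair_conv_assoc //.
  by apply: cXY => //; [exact: cm_lin | exact: perp_convr].
Qed.

Lemma subcoalg_wedgel D S Y : subcoalg C S -> vincl S D -> vincl S (wedge C D S Y).
Proof.
move=> [_ Scm] SD s Ss; split; first exact: SD.
- exact: (in_tensorS SD SD (Scm s Ss)).
- exact: (in_tensor_tsuml (fun x Sx => Sx) (Scm s Ss)).
Qed.

Lemma subcoalg_wedger D X T : subcoalg C T -> vincl T D -> vincl T (wedge C D X T).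
Proof.
move=> [_ Tcm] TD t Tt; split; first exact: TD.
- exact: (in_tensorS TD TD (Tcm t Tt)).
- exact: (in_tensor_tsumr (fun x Tx => Tx) (Tcm t Tt)).
Qed.

Lemma wedge_restrict D D' X Y : subcoalg C D -> vincl D D' ->
  (forall c, wedge C D' X Y c -> D c) -> vsame (wedge C D' X Y) (wedge C D X Y).
Proof.
move=> [_ Dcm] DD' D'D c; split.
- by move=> cW; have Dc := D'D c cW; case: cW => _ _ cXY; split=> //; apply: Dcm.
- by case=> Dc cDD cXY; split=> //; [exact: DD' | exact: (in_tensorS DD' DD' cDD)].
Qed.

Lemma in_tsum_vsum A B S T c : subcoalg C A -> subspace B -> subspace S -> subcoalg C T ->
  (forall x, S x -> A x -> x = 0) -> (forall x, T x -> B x -> x = 0) ->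
  in_tsum A B (cm C c) -> in_tsum S T (cm C c) -> vsum S T c.
Proof.
move=> Acoalg Bsub Ssub Tcoalg SA0 TB0 cAB cST.
have [[Asub _] [Tsub _]] := (Acoalg, Tcoalg).
apply: perp_closed => [|h hlin hST]; first exact: vsum_subspace.
have hS : perp S h by move=> s Ss; apply: hST; exists s, 0; rewrite addr0; case: Tsub.
have hT : perp T h by move=> t Tt; apply: hST; exists 0, t; rewrite add0r; case: Ssub.
have [e1 [e2 [e1lin e2lin e1T e2B eD]]] := counit_split Tsub Bsub TB0.
have [d1 [d2 [d1lin d2lin d1S d2A dD]]] := counit_split Ssub Asub SA0.
have he2lin := cm_lin C hlin e2lin.
rewrite (lfun_cm_counitr c hlin) (tpair_splitr _ _ eD) cST // add0r.
rewrite [LHS](lfun_cm_counitl c he2lin) (tpair_splitl _ _ dD) cST //; last exact: perp_convl.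
by rewrite add0r tpair_conv_assoc // cAB //; [exact: cm_lin | exact: perp_convl].
Qed.

Lemma simple_sub_wedge A B S : subcoalg C A -> subcoalg C B -> simple_subcoalg C S ->
  vincl S (wedge C (fun _ => True) A B) -> vincl S A \/ vincl S B.
Proof.
move=> Acoalg Bcoalg Ssimple SAB; apply: contrapT => /not_orP[SnA SnB].
have SA0 := simple_subcoalg_cap0 Ssimple Acoalg SnA.
have SB0 := simple_subcoalg_cap0 Ssimple Bcoalg SnB.
case: Ssimple => [[Ssub Scm] [x [Sx xn0]] _]; apply: xn0.
apply: (SB0 x Sx); apply: (in_tsum_cap0l (X := A) (X' := S)) => //.
- by case: Acoalg.
- by case: Bcoalg.
- by move=> y Ay Sy; apply: SA0.
- by have [] := SAB x Sx.
- exact: (in_tensor_tsuml (fun y Sy => Sy) (Scm x Sx)).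
Qed.

End Coalgebra.

Unset Implicit Arguments.

Theorem mainTheorem7 (k : fieldType) (V : lmodType k) (C : coalgebra V)
  (A B : V -> Prop) :
  basic C -> subcoalg C A -> subcoalg C B ->
  let AB := wedge C (fun _ => True) A B in
  (* (a) *)
  (forall S, simple_subcoalg C S -> vincl S AB -> vincl S A \/ vincl S B) /\
  (* (b) *)
  (forall S T, simple_subcoalg C S -> vincl S AB ->
               simple_subcoalg C T -> vincl T AB ->
     (~ vincl S A -> ~ vincl T B ->
        vsame (wedge C AB S T) (vsum S T) /\ (forall x, S x -> T x -> x = 0)) /\
     (vincl S A -> vincl T B ->
        vsame (wedge C AB S T) (wedge C (fun _ => True) S T)) /\
     (vincl S A -> ~ vincl T B ->
        vsame (wedge C AB S T) (wedge C A S T)) /\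
     (~ vincl S A -> vincl T B ->
        vsame (wedge C AB S T) (wedge C B S T))).
Proof.
move=> _ Acoalg Bcoalg AB.
have ABcoalg : subcoalg C AB := wedge_subcoalg Acoalg Bcoalg.
have [[Asub _] [Bsub _]] := (Acoalg, Bcoalg).
split=> [S|S T Ssimple SAB Tsimple TAB]; first exact: simple_sub_wedge.
have [Scoalg _ _] := Ssimple; have [Tcoalg _ _] := Tsimple.
have [[Ssub _] [Tsub _]] := (Scoalg, Tcoalg).
split; [move=> SnA TnB | split; [move=> SA TB | split; [move=> SA TnB | move=> SnA TB]]].
- have SA0 := simple_subcoalg_cap0 Ssimple Acoalg SnA.
  have TB0 := simple_subcoalg_cap0 Tsimple Bcoalg TnB.
  have SB : vincl S B by case: (simple_sub_wedge Acoalg Bcoalg Ssimple SAB).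
  split=> [c|x Sx Tx]; last exact: TB0 x Tx (SB x Sx).
  split=> [[[_ _ cAB] _ cST]|[s [t [Ss [Tt ->]]]]]; first exact: in_tsum_vsum cAB cST.
  apply: (subspaceD (wedge_subspace C S T (proj1 ABcoalg))).
  + exact: subcoalg_wedgel.
  + exact: subcoalg_wedger.
- move=> c; apply: iff_sym; move: c.
  apply: wedge_restrict => // d [_ _ dST].
  by split=> //; [exact: in_tensorT | exact: (in_tsumS SA TB dST)].
- apply: wedge_restrict => // [|c [[_ _ cAB] _ cST]]; first exact: subcoalg_wedgel.
  apply: in_tsum_cap0r Asub Bsub Tsub _ cAB (in_tsumS SA (fun y Ty => Ty) cST).
  by move=> y By Ty; apply: simple_subcoalg_cap0 Tsimple Bcoalg TnB y Ty By.
- apply: wedge_restrict => // [|c [[_ _ cAB] _ cST]]; first exact: subcoalg_wedger.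
  apply: in_tsum_cap0l Asub Ssub Bsub _ cAB (in_tsumS (fun x Sx => Sx) TB cST).
  by move=> x Ax Sx; apply: simple_subcoalg_cap0 Ssimple Acoalg SnA x Sx Ax.
Qed.
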